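(* Let $a,b$ be positive integers with $\gcd(a,b)=1$. For all $\pi\in\mathcal{D}_{b,-a}(a,b)$, $$\mathrm{word}(\mathrm{G}_{b,a}(\pi))=\mathrm{sw}^+_{b,-a}\circ\mathrm{rev}(\mathrm{word}(\pi)).$$
   Context: Partitions are drawn in English convention in the first quadrant; a partition with at most $a$ parts, each at most $b$, has as frontier a lattice path from $(0,0)$ to $(b,a)$ with unit north (N) and east (E) steps, its diagram consisting of the unit squares above and to the left of the path; $\mathrm{word}(\lambda)\in\{\mathrm{N},\mathrm{E}\}^*$ is the word of this path. $\mathrm{rev}$ reverses a word. The $(b,-a)$-level of a lattice point $(x,y)$ is $by-ax$; a unit square $[x,x+1]\times[y,y+1]$ (any integers $x,y$) has the level of its southeast corner $(x+1,y)$. $\mathcal{D}_{b,-a}(a,b)$ is the set of partitions fitting in the $a\times b$ rectangle whose frontier path visits only lattice points of nonnegative level. The map $\mathrm{G}_{b,a}$: for $\pi\in\mathcal{D}_{b,-a}(a,b)$, its $b$-generators $\beta_1<\beta_2<\cdots<\beta_b$ are the levels of the squares immediately above the $b$ east steps of the frontier path (the square $[x,x+1]\times[y,y+1]$ for an east step from $(x,y)$ to $(x+1,y)$). Let $\Delta^c$ be the finite set of levels of unit squares lying above the line $by=ax$ and below the frontier path of $\pi$. For each $i$ set $g_{b,a}(\beta_i)=|\{\beta_i,\beta_i+1,\ldots,\beta_i+a-1\}\cap\Delta^c|$. Then $\mathrm{G}_{b,a}(\pi)$ is the partition whose $i$-th column has length $g_{b,a}(\beta_i)$ for $1\le i\le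 b$, regarded as fitting in the $a\times b$ rectangle. For a word $w=w_1\cdots w_n$, set $l_0=0$, $l_i=l_{i-1}+b$ if $w_i=\mathrm{N}$, $l_i=l_{i-1}-a$ if $w_i=\mathrm{E}$. $\mathrm{sw}^+_{b,-a}(w)$ is obtained by: for $k=0,-1,-2,\ldots$ and then $k=\ldots,3,2,1$ (all nonpositive values in decreasing order, then all positive values in decreasing order), scan $w$ from left to right and append each $w_i$ ($i\ge1$) with $l_i=k$. *)

From HB Require Import structures.
From mathcomp Require Import all_boot all_order all_algebra.
Set Implicit Arguments. Unset Strict Implicit. Unset Printing Implicit Defensive.
Import Order.TTheory GRing.Theory Num.Theory.

Inductive step := N | E.

Definition step_eqb (s t : step) : bool :=
  match s, t with N, N | E, E => true | _, _ => false end.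
Lemma step_eqP : Equality.axiom step_eqb.
Proof. by case; case; constructor. Qed.
HB.instance Definition _ := hasDecEq.Build step step_eqP.

(* A partition fitting in the a x b rectangle (at most a parts, each at most
   b) is encoded by the list [c_1; ...; c_b] of its b column lengths
   (columns numbered from left to right, zero columns included):
   a weakly decreasing list of length b with entries <= a. *)
Definition is_box_partition (a b : nat) (c : seq nat) : bool :=
  [&& size c == b, sorted geq c & all (fun x => x <= a) c].

(* word(lambda): the frontier path from (0,0) to (b,a).  Above the i-th east
   step lies column i, of length c_i, so that east step is at height a - c_i.
   word = N^(d_1 - d_0) E N^(d_2 - d_1) E ... N^(d_b - d_(b-1)) E N^(a - d_b),
   with d_0 = 0 and d_i = a - c_i. *)
Definition word (a b : nat) (c : seq nat) : seq step :=
  let d := [seq a - x | x <- c] in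
  flatten [seq rcons (nseq (p.2 - p.1) N) E | p <- zip (0 :: d) d]
  ++ nseq (a - last 0 d) N.

Definition move (p : nat * nat) (s : step) : nat * nat :=
  match s with N => (p.1, p.2.+1) | E => (p.1.+1, p.2) end.
Definition pts (w : seq step) : seq (nat * nat) := (0, 0) :: scanl move (0, 0) w.

Definition level (a b : nat) (p : nat * nat) : int :=
  (Posz (b * p.2) - Posz (a * p.1))%R.

Definition inD (a b : nat) (c : seq nat) : bool :=
  is_box_partition a b c && all (fun p => (0 <= level a b p)%R) (pts (word a b c)).

Definition east_starts (w : seq step) : seq (nat * nat) :=
  [seq ps.1 | ps <- zip (pts w) w & ps.2 == E].

(* Level of the unit square [x,x+1]x[y,y+1]: level of its SE corner (x+1,y). *)
Definition sq_level (a b : nat) (x y : nat) : int := level a b (x.+1, y).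

Definition generators (a b : nat) (c : seq nat) : seq int :=
  sort (fun u v : int => (u <= v)%R)
    [seq sq_level a b p.1 p.2 | p <- east_starts (word a b c)].

(* Delta^c: levels of the unit squares lying above the line b y = a x (i.e.
   whose lowest point, the SE corner, has nonnegative level) and below the
   frontier path.  The squares below the path are those [x,x+1]x[y',y'+1]
   under an east step from (x,y), i.e. y' < y; squares with y' < 0 are never
   above the line (x >= 0), so y' ranges over 0 .. y-1. *)
Definition DeltaC (a b : nat) (c : seq nat) : seq int :=
  [seq l <- flatten [seq [seq sq_level a b p.1 y' | y' <- iota 0 p.2]
                     | p <- east_starts (word a b c)]
  | (0 <= l)%R].

Definition g_ba (a b : nat) (c : seq nat) (beta : int) : nat :=
  count (fun k => k \in DeltaC a b c) [seq beta + (Posz k) | k <- iota 0 a]%R.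

Definition G_ba (a b : nat) (c : seq nat) : seq nat :=
  [seq g_ba a b c beta | beta <- generators a b c].

Definition step_incr (a b : nat) (s : step) : int :=
  match s with N => (Posz b)%R | E => (- (Posz a))%R end.
Definition word_levels (a b : nat) (w : seq step) : seq int :=
  scanl (fun l s => l + step_incr a b s)%R 0%R w.

(* All levels satisfy
   |l_i| <= (a+b) n (n = size w), so k ranges over [-M, M] with M = (a+b) n;
   the omitted values of k contribute nothing. *)
Definition sw_plus (a b : nat) (w : seq step) : seq step :=
  let M := ((a + b) * size w)%N in
  let ks := [seq (- (Posz j))%R | j <- iota 0 M.+1] ++ [seq Posz (M - j) | j <- iota 0 M] in
  let wl := zip w (word_levels a b w) in
  flatten [seq [seq q.1 | q <- wl & q.2 == k] | k <- ks].

(* Let w be the word of pi.  As a and b are coprime and the path stays in the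
   a x b box, the lattice points of the path have pairwise distinct levels,
   all nonnegative.  Read from its end, the path rev w visits the starting
   points of the steps of w at the opposite levels, so sw^+(rev w) lists the
   steps of w by increasing level of their starting points.  Its east steps
   thus come in the order of the generators, an east step from a point of
   level l having generator l - a, and the corresponding column of the
   partition with word sw^+(rev w) counts the north steps starting above l.
   That count is g(l - a): each such north step is matched with the unique
   square of Delta^c to its right whose level falls in {l - a, ..., l - 1}. *)

From mathcomp Require Import all_boot all_order all_algebra.
From mathcomp Require Import zify ring.
Import Order.TTheory GRing.Theory Num.Theory.
Set Implicit Arguments. Unset Strict Implicit. Unset Printing Implicit Defensive.

Fixpoint east_heights (y : nat) (w : seq step) : seq nat :=
  match w with
  | [::] => [::]
  | N :: w' => east_heights y.+1 w'
  | E :: w' => y :: east_heights y w'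
  end.

Lemma east_heights_ge y w : all (leq y) (east_heights y w).
Proof.
elim: w y => [|[] w IH] y //=; last by rewrite leqnn IH.
by apply/allP=> x /(allP (IH y.+1)) /ltnW.
Qed.

Lemma east_heights_le y w : all (leq^~ (y + count_mem N w)) (east_heights y w).
Proof.
elim: w y => [|[] w IH] y //=; last by rewrite leq_addr IH.
by apply/allP=> x /(allP (IH y.+1)); rewrite addSnnS.
Qed.

Lemma sorted_east_heights y w : sorted leq (east_heights y w).
Proof.
elim: w y => [|[] w IH] y //=.
by rewrite path_min_sorted // east_heights_ge.
Qed.

Lemma size_east_heights y w : size (east_heights y w) = count_mem E w.
Proof. by elim: w y => [|[] w IH] y //=; rewrite IH. Qed.

Lemma flatten_east_heights a y w : y + count_mem N w = a ->
  flatten [seq rcons (nseq (p.2 - p.1) N) E | p <- zip (y :: east_heights y w) (east_heights y w)]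
  ++ nseq (a - last y (east_heights y w)) N = w.
Proof.
elim: w y => [|[] w IH] y /=.
- by move=> <-; rewrite addn0 subnn.
- rewrite -addSnnS => wN; have := east_heights_ge y.+1 w; move: (IH _ wN).
  case: (east_heights y.+1 w) => [|x hs] /= <- //; first by have ->: a - y = (a - y.+1).+1 by lia.
  by case/andP=> y_lt_x _; have ->: x - y = (x - y.+1).+1 by lia.
- by rewrite add0n subnn => /IH /= ->.
Qed.

Lemma word_east_heights a b w : count_mem N w = a ->
  word a b [seq a - y | y <- east_heights 0 w] = w.
Proof.
move=> wN; rewrite /word -map_comp.
have ->: [seq a - (a - y) | y <- east_heights 0 w] = east_heights 0 w.
  rewrite -[RHS]map_id; apply/eq_in_map => y /(allP (east_heights_le 0 w)).
  rewrite add0n wN /=; lia.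
exact: flatten_east_heights.
Qed.

Lemma box_partition_east_heights a b w : count_mem N w = a -> count_mem E w = b ->
  is_box_partition a b [seq a - y | y <- east_heights 0 w].
Proof.
move=> wN wE; rewrite /is_box_partition size_map size_east_heights wE eqxx /=.
rewrite sorted_map (sub_sorted _ (sorted_east_heights 0 w)) => [|x y]; last exact: leq_sub2l.
by apply/allP=> x /mapP[y _ ->]; exact: leq_subr.
Qed.

Lemma count_flatten_columns (P : pred step) d0 d : path leq d0 d ->
  count P (flatten [seq rcons (nseq (p.2 - p.1) N) E | p <- zip (d0 :: d) d])
  = (last d0 d - d0) * P N + size d * P E.
Proof.
elim: d d0 => [|x d IH] d0 /=; first by rewrite subnn.
case/andP=> le_d0x dx; rewrite count_cat IH // -cats1 count_cat count_nseq /=.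
have : x <= last x d.
  case/lastP: d {IH} dx => // d' y; rewrite last_rcons => /(order_path_min leq_trans)/allP.
  by apply; rewrite mem_rcons inE eqxx.
case: (P N); case: (P E) => /=; lia.
Qed.

Lemma count_word a b c : is_box_partition a b c ->
  count_mem N (word a b c) = a /\ count_mem E (word a b c) = b.
Proof.
case/and3P=> /eqP sz_c sorted_c c_le_a.
set d := [seq a - x | x <- c].
have d_path : path leq 0 d.
  rewrite path_min_sorted; last by apply/allP.
  by rewrite /d sorted_map (sub_sorted _ sorted_c) // => x y; exact: leq_sub2l.
have last_le_a : last 0 d <= a.
  have: last 0 d \in 0 :: d by rewrite mem_last.
  by rewrite inE => /orP[/eqP ->//|/mapP[x _ ->]]; exact: leq_subr.
rewrite /word -/d !count_cat !count_flatten_columns // !count_nseq /= size_map sz_c.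
split; lia.
Qed.

Lemma uniq_map_inj_in (T1 T2 : eqType) (f : T1 -> T2) s :
  uniq (map f s) -> {in s &, injective f}.
Proof.
elim: s => [|x s IH] //= /andP[fx_notin uniq_fs] y z; rewrite !inE.
case/orP=> [/eqP->|ys]; case/orP=> [/eqP->|zs] // fyz.
- by move: fx_notin; rewrite fyz map_f.
- by move: fx_notin; rewrite -fyz map_f.
- exact: IH.
Qed.

Definition path_points (p : nat * nat) (w : seq step) := p :: scanl move p w.

Definition steps_from (p : nat * nat) (w : seq step) := zip (path_points p w) w.

Definition starts_from (p : nat * nat) (w : seq step) (s : step) :=
  [seq q.1 | q <- steps_from p w & q.2 == s].

Lemma steps_from_cons p s w : steps_from p (s :: w) = (p, s) :: steps_from (move p s) w.
Proof. by []. Qed.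

Lemma unzip2_steps_from p w : unzip2 (steps_from p w) = w.
Proof. by elim: w p => [|s w IH] p //=; rewrite -/(steps_from _ _) IH. Qed.

Lemma coord_sum_steps_from p w :
  [seq q.1.1 + q.1.2 | q <- steps_from p w] = iota (p.1 + p.2) (size w).
Proof.
elim: w p => [|s w IH] p //=; rewrite -/(steps_from _ _) IH.
by case: s => /=; rewrite ?addnS ?addSn.
Qed.

Lemma uniq_steps_from_points p w : uniq (unzip1 (steps_from p w)).
Proof.
apply: (map_uniq (f := fun p : nat * nat => p.1 + p.2)).
by rewrite -map_comp coord_sum_steps_from iota_uniq.
Qed.

Lemma steps_from_bounds p w q : q \in steps_from p w ->
  [/\ q.1.2 <= p.2 + count_mem N w & q.2 = N -> q.1.2 < p.2 + count_mem N w].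
Proof.
elim: w p => [|s w IH] p //; rewrite steps_from_cons inE => /orP[/eqP ->|/IH].
  by case: s => /=; split => //; lia.
by case: s => /= [] [y_le y_lt]; split=> [|/y_lt]; lia.
Qed.

Lemma steps_from_start p w q : q \in steps_from p w -> q.1 \in path_points p w.
Proof.
elim: w p => [|s w IH] p //; rewrite steps_from_cons inE => /orP[/eqP ->|/IH].
  by rewrite inE eqxx.
by move=> H; rewrite /path_points /= inE H orbT.
Qed.

Lemma steps_from_end p w q : q \in steps_from p w -> move q.1 q.2 \in path_points p w.
Proof.
elim: w p => [|s w IH] p //; rewrite steps_from_cons inE => /orP[/eqP ->|/IH].
  by rewrite /= !inE eqxx orbT.
by move=> H; rewrite /path_points /= inE H orbT.
Qed.

Lemma mem_starts_from p w s r : (r \in starts_from p w s) = ((r, s) \in steps_from p w).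
Proof.
apply/mapP/idP => [[q]|H]; last by exists (r, s); rewrite // mem_filter H eqxx.
by rewrite mem_filter => /andP[/eqP <- qw] ->; rewrite -surjective_pairing.
Qed.

Lemma height_starts_from p w : [seq r.2 | r <- starts_from p w N] = iota p.2 (count_mem N w).
Proof. by elim: w p => [|[] w IH] p //=; rewrite IH. Qed.

Lemma uniq_starts_from_north p w : uniq (starts_from p w N).
Proof. by apply: (map_uniq (f := snd)); rewrite height_starts_from iota_uniq. Qed.

Lemma size_starts_from_north p w : size (starts_from p w N) = count_mem N w.
Proof. by rewrite -(size_map snd) height_starts_from size_iota. Qed.

Lemma starts_from_north_inj p w : {in starts_from p w N &, injective snd}.
Proof.
by apply: uniq_map_inj_in; rewrite height_starts_from iota_uniq.
Qed.

Lemma under_east_step_iff p0 w X Y :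
  (exists p, [/\ p \in starts_from p0 w E, Y < p.2 & X = p.1.+1]) <->
  (exists p, [/\ p \in starts_from p0 w N, p.2 = Y, p.1 < X & X <= p0.1 + count_mem E w])
  \/ (p0.1 < X <= p0.1 + count_mem E w /\ Y < p0.2).
Proof.
elim: w p0 => [|s w IH] p0.
  split; first by case=> p [].
  by case=> [[p []]|[/andP[H1 H2] _]] //; move: H2; rewrite /= addn0; lia.
case: s; rewrite /starts_from steps_from_cons -/(starts_from _ w _) /=.
- rewrite (IH (move p0 N)) /=; split.
  + case=> [[p [H1 H2 H3 H4]]|[H1 H2]].
      by left; exists p; split => //; rewrite inE H1 orbT.
    case: (ltngtP Y p0.2) => HY.
    * by right.
    * by move: H2; rewrite /=; lia.
    * by left; exists p0; split => //; rewrite ?inE ?eqxx //; lia.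
  + case=> [[p [+ H2 H3 H4]]|[H1 H2]]; last by right; split => //; lia.
    rewrite inE => /orP[/eqP Hp|H1]; last by left; exists p.
    by right; subst p; split => //; lia.
- split.
  + case=> p []; rewrite inE => /orP[/eqP ->|Hp] HY HX; first by right; split => //; lia.
    have /IH /= : exists p, [/\ p \in starts_from (move p0 E) w E, Y < p.2 & X = p.1.+1].
      by exists p.
    case=> [[q [H1 H2 H3 H4]]|[H1 H2]]; first by left; exists q; split => //; lia.
    by right; split => //; lia.
  + case=> [[p [H1 H2 H3 H4]]|[H1 H2]].
      have : exists p, [/\ p \in starts_from (move p0 E) w E, Y < p.2 & X = p.1.+1].
        by apply/IH; left; exists p; split => //=; lia.
      by case=> q [Hq ? ?]; exists q; split => //; rewrite inE Hq orbT.
    case: (ltngtP X p0.1.+1) => HX; first by lia.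
      have : exists p, [/\ p \in starts_from (move p0 E) w E, Y < p.2 & X = p.1.+1].
        by apply/IH; right; split => //=; lia.
      by case=> q [Hq ? ?]; exists q; split => //; rewrite inE Hq orbT.
    by exists p0; split => //; rewrite inE eqxx.
Qed.

Local Open Scope ring_scope.

Section Levels.
Variables a b : nat.

Lemma level_move p s : level a b (move p s) = level a b p + step_incr a b s.
Proof. by case: s; case: p => x y; rewrite /level /= ?mulnS ?mulnSr PoszD; lia. Qed.

Lemma level_shift_right x y t :
  level a b ((x + t)%N, y) = level a b (x, y) - Posz (a * t).
Proof. by rewrite /level /= mulnDr PoszD; lia. Qed.

Fixpoint levels_from (l : int) (w : seq step) : seq int :=
  if w is s :: w' then l :: levels_from (l + step_incr a b s) w' else [::].

Lemma size_levels_from l w : size (levels_from l w) = size w.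
Proof. by elim: w l => [|s w IH] l //=; rewrite IH. Qed.

Lemma levels_fromD l d w : levels_from (l + d) w = [seq x + d | x <- levels_from l w].
Proof.
elim: w l => [|s w IH] l //=; congr (_ :: _).
by rewrite -IH; congr levels_from; rewrite -!addrA [d + _]addrC.
Qed.

Lemma levels_steps_from p w :
  [seq (q.2, level a b q.1) | q <- steps_from p w] = zip w (levels_from (level a b p) w).
Proof. by elim: w p => [|s w IH] p //=; rewrite -/(steps_from _ _) IH level_move. Qed.

Definition drift (w : seq step) : int := \sum_(s <- w) step_incr a b s.

Lemma drift_count w : drift w = Posz (b * count_mem N w) - Posz (a * count_mem E w).
Proof.
elim: w => [|s w IH]; first by rewrite /drift big_nil /= !muln0.
rewrite /drift big_cons -/(drift w) IH.
by case: s => /=; rewrite ?mulnDr ?muln1 ?muln0 ?PoszD; lia.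
Qed.

Lemma foldl_step_incr l w : foldl (fun l s => l + step_incr a b s) l w = l + drift w.
Proof.
elim: w l => [|s w IH] l /=; first by rewrite /drift big_nil addr0.
by rewrite IH /drift big_cons addrA.
Qed.

Lemma scanl_step_incr_rev l w :
  scanl (fun l s => l + step_incr a b s) l (rev w)
  = rev [seq l + (drift w - x) | x <- levels_from 0 w].
Proof.
elim: w => [|s w IH] //=.
rewrite rev_cons -cats1 scanl_cat IH foldl_step_incr /drift big_rev.
rewrite -[step_incr a b s]add0r levels_fromD add0r -map_comp rev_cons -cats1.
congr (_ ++ _); last by rewrite /= big_cons subr0; congr [:: _]; ring.
by congr rev; apply/eq_map => x /=; rewrite big_cons; ring.
Qed.

Lemma zip_word_levels_rev w : drift w = 0 ->
  zip (rev w) (word_levels a b (rev w))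
  = rev [seq (q.2, - level a b q.1) | q <- steps_from (0, 0)%N w].
Proof.
move=> drift0; rewrite /word_levels scanl_step_incr_rev drift0.
rewrite -rev_zip ?size_map ?size_levels_from //; congr rev.
have -> : [seq (q.2, - level a b q.1) | q <- steps_from (0, 0)%N w]
          = [seq (x.1, - x.2) | x <- zip w (levels_from 0 w)].
  have level00 : level a b (0, 0)%N = 0 by rewrite /level /= !muln0.
  by rewrite -{1}level00 -levels_steps_from -map_comp.
by elim: w {drift0} (levels_from 0 w) => [|s w IH] [|x l] //=; rewrite IH add0r sub0r.
Qed.

End Levels.

Definition sw_keys (M : nat) : seq int :=
  [seq - Posz j | j <- iota 0 M.+1] ++ [seq Posz (M - j) | j <- iota 0 M].

Definition sw_classes (T : Type) (ks : seq int) (U : seq (T * int)) :=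
  flatten [seq [seq q <- U | q.2 == k] | k <- ks].

Lemma sw_plusE a b u : sw_plus a b u =
  unzip1 (sw_classes (sw_keys ((a + b) * size u)) (zip u (word_levels a b u))).
Proof. by rewrite /sw_plus /sw_classes /unzip1 map_flatten -map_comp. Qed.

Lemma flatten_map_nil (S T : eqType) (f : S -> seq T) s :
  {in s, forall x, f x = [::]} -> flatten [seq f x | x <- s] = [::].
Proof.
elim: s => [|x s IH] //= fs_nil; rewrite fs_nil ?mem_head ?IH // => y ys.
by rewrite fs_nil ?inE ?ys ?orbT.
Qed.

Section SwClasses.
Variables (T : eqType) (U : seq (T * int)).
Hypothesis uniq_keys : uniq (unzip2 U).

Lemma size_sw_class k : (size [seq q <- U | q.2 == k] <= 1)%N.
Proof.
rewrite size_filter -(count_map snd (pred1 k)) count_uniq_mem //.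
by case: (_ \in _).
Qed.

Lemma pairwise_sw_classes ks : sorted >%R ks ->
  pairwise (fun p q => q.2 < p.2) (sw_classes ks U).
Proof.
elim: ks => [|k ks IH] //= sorted_kks; rewrite pairwise_cat; apply/and3P; split.
- have ks_lt_k : all (fun y => y < k) ks.
    by apply: order_path_min sorted_kks => x y z yx zy; exact: lt_trans zy yx.
  apply/allrelP => p q; rewrite mem_filter => /andP[/eqP -> _].
  by case/flatten_mapP => k' /(allP ks_lt_k) + ; rewrite mem_filter => + /andP[/eqP -> _].
- by case: [seq q <- U | q.2 == k] (size_sw_class k) => [|? []].
- exact/IH/(path_sorted sorted_kks).
Qed.

Lemma perm_sw_classes ks : sorted >%R ks -> {subset unzip2 U <= ks} ->
  perm_eq (sw_classes ks U) U.
Proof.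
move=> sorted_ks keys_ks; apply: uniq_perm.
- apply: (pairwise_uniq (r := fun p q => q.2 < p.2)); first by move=> q; rewrite ltxx.
  exact: pairwise_sw_classes.
- exact: map_uniq uniq_keys.
move=> q; apply/flatten_mapP/idP => [[k _]|Uq]; first by rewrite mem_filter => /andP[].
by exists q.2; rewrite ?mem_filter ?eqxx ?Uq // keys_ks ?map_f.
Qed.

Local Notation nonpos_keys M := [seq - Posz j | j <- iota 0 M.+1].

Lemma sw_classes_sw_keys M : all (fun k => - Posz M <= k <= 0) (unzip2 U) ->
  sw_classes (sw_keys M) U = sw_classes (nonpos_keys M) U.
Proof.
move=> keys_range; rewrite /sw_classes /sw_keys map_cat flatten_cat -[RHS]cats0.
congr (_ ++ _); rewrite -map_comp; apply: flatten_map_nil => j /[!mem_iota] /andP[_ jM] /=.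
apply/eqP; rewrite -size_eq0 size_filter eqn0Ngt -has_count; apply/hasPn => q.
move=> /(map_f snd) /(allP keys_range) /andP[_ q_le0].
by apply/eqP => qj; move: q_le0; rewrite qj; lia.
Qed.

Lemma sorted_sw_classes_nonpos M :
  sorted (fun p q => q.2 < p.2) (sw_classes (nonpos_keys M) U).
Proof.
rewrite sorted_pairwise ?pairwise_sw_classes // => [|p q r qp rq]; last exact: lt_trans rq qp.
by rewrite sorted_map (sub_sorted _ (iota_ltn_sorted 0 M.+1)) // => i j /=; lia.
Qed.

Lemma mem_sw_classes_nonpos M : all (fun k => - Posz M <= k <= 0) (unzip2 U) ->
  sw_classes (nonpos_keys M) U =i U.
Proof.
move=> keys_range; apply/perm_mem/perm_sw_classes.
  by rewrite sorted_map (sub_sorted _ (iota_ltn_sorted 0 M.+1)) // => i j /=; lia.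
move=> k /(allP keys_range) /andP[ge_M le0].
by apply/mapP; exists `|k|%N; rewrite ?mem_iota; lia.
Qed.

End SwClasses.

Section SortByLevel.
Variables a b : nat.

Definition by_level (p q : (nat * nat) * step) := level a b p.1 <= level a b q.1.

Lemma sorted_sort_by_level s :
  uniq (unzip1 s) -> {in unzip1 s &, injective (level a b)} ->
  sorted (fun p q => level a b p.1 < level a b q.1) (sort by_level s).
Proof.
move=> uniq_s inj_s; pose key := fun q : (nat * nat) * step => level a b q.1.
have perm_key : perm_eq (map key (sort by_level s)) (map key s).
  by apply: perm_map; rewrite perm_sort.
rewrite -(@sorted_map _ _ key <%R) lt_sorted_uniq_le (perm_uniq perm_key).
rewrite /key (map_comp (level a b) fst) map_inj_in_uniq // uniq_s /=.
by rewrite sorted_map; apply: sort_sorted => p q; apply: le_total.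
Qed.

Lemma sw_plus_rev w : drift a b w = 0 ->
  {in unzip1 (steps_from (0, 0)%N w) &, injective (level a b)} ->
  all (fun q => 0 <= level a b q.1) (steps_from (0, 0)%N w) ->
  sw_plus a b (rev w) = unzip2 (sort by_level (steps_from (0, 0)%N w)).
Proof.
move=> drift0 inj_steps levels_ge0.
set steps := steps_from _ w; set M := ((a + b) * size (rev w))%N.
set pair := fun q : (nat * nat) * step => (q.2, - level a b q.1).
have uniq_keys : uniq (unzip2 (rev (map pair steps))).
  rewrite /unzip2 map_rev rev_uniq -map_comp.
  rewrite (map_comp (fun x : int => - x) (fun q => level a b q.1)) (map_inj_uniq oppr_inj).
  by rewrite (map_comp (level a b) fst) map_inj_in_uniq // uniq_steps_from_points.
have keys_range : all (fun k => - Posz M <= k <= 0) (unzip2 (rev (map pair steps))).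
  rewrite /unzip2 map_rev all_rev -map_comp; apply/allP => _ /mapP[q qw ->] /=.
  rewrite oppr_le0 (allP levels_ge0 q qw) andbT lerN2 /level.
  have [y_le _] := steps_from_bounds qw.
  have : (b * q.1.2 <= M)%N.
    rewrite /M size_rev leq_mul ?leq_addl //; apply: leq_trans y_le _.
    by rewrite add0n -(count_predC (pred1 N)) leq_addr.
  by move: (b * _)%N (a * _)%N => u v; lia.
rewrite sw_plusE zip_word_levels_rev // -/steps -/M sw_classes_sw_keys //.
suff -> : sw_classes [seq - Posz j | j <- iota 0 M.+1] (rev (map pair steps))
          = map pair (sort by_level steps) by rewrite /unzip1 -map_comp.
apply: (irr_sorted_eq (leT := fun p q => q.2 < p.2)).
- by move=> p q r qp rq; exact: lt_trans rq qp.
- by move=> p; rewrite ltxx.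
- exact: sorted_sw_classes_nonpos.
- rewrite sorted_map; apply: sub_sorted (sorted_sort_by_level _ _) => //.
  + by move=> p q /=; rewrite ltrN2.
  + exact: uniq_steps_from_points.
move=> q; rewrite mem_sw_classes_nonpos // mem_rev.
by rewrite (perm_mem (perm_map pair (permEl (perm_sort by_level steps)))).
Qed.

End SortByLevel.

Local Close Scope ring_scope.

Lemma east_heights_sorted (T : eqType) (key : T -> int) (U : seq (T * step)) y :
  sorted (fun p q => (key p.1 < key q.1)%R) U ->
  east_heights y (unzip2 U) =
  [seq y + count (fun q => (q.2 == N) && (key q.1 < key p.1)%R) U | p <- U & p.2 == E].
Proof.
rewrite sorted_pairwise => [|p q r]; last exact: lt_trans.
elim: U y => [|[t s] U IH] y //; rewrite pairwise_cons => /andP[/allP head_lt U_pairwise].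
case: s head_lt => /= head_lt; rewrite IH //.
- apply/eq_in_map => p; rewrite mem_filter => /andP[_ pU] /=.
  by rewrite head_lt // addSnnS.
- rewrite (eq_in_count (a2 := pred0)) ?count_pred0 ?addn0 // => q qU /=.
  by rewrite ltNge (ltW (head_lt q qU)) andbF.
Qed.

Lemma coprime_dvdn_subn a b y1 y2 u1 u2 : coprime a b ->
  b * y1 + a * u2 = b * y2 + a * u1 -> a %| y1 - y2.
Proof.
move=> coprime_ab eq_lin; rewrite -(Gauss_dvdr _ coprime_ab).
have -> : b * (y1 - y2) = a * (u1 - u2) by rewrite !mulnBr; lia.
exact: dvdn_mulr.
Qed.

Lemma height_eq_of_coprime a b y1 y2 u1 u2 : coprime a b -> y1 < a -> y2 < a ->
  b * y1 + a * u2 = b * y2 + a * u1 -> y1 = y2.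
Proof.
move=> coprime_ab y1_lt y2_lt eq_lin.
have d12 := coprime_dvdn_subn coprime_ab eq_lin.
have d21 := coprime_dvdn_subn coprime_ab (esym eq_lin).
case: (posnP (y1 - y2)) => [y12|/dvdn_leq/(_ d12)]; last lia.
case: (posnP (y2 - y1)) => [|/dvdn_leq/(_ d21)]; lia.
Qed.

(* Points of a box path have distinct levels: two points at the same level
   differ by a multiple of (b, a), which does not fit in the box. *)
Lemma level_inj a b p q : 0 < a -> coprime a b ->
  p.1 + p.2 < a + b -> p.2 <= a -> q.1 + q.2 < a + b -> q.2 <= a ->
  level a b p = level a b q -> p = q.
Proof.
case: p q => x1 y1 [x2 y2] /= a_gt0 coprime_ab p_lt p_le q_lt q_le.
rewrite /level /= => eq_level.
have eq_lin : b * y1 + a * x2 = b * y2 + a * x1.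
  by move: eq_level; move: (b * _) (b * _) (a * _) (a * _) => ????; lia.
clear eq_level.
wlog y21 : x1 y1 x2 y2 p_lt p_le q_lt q_le eq_lin / y2 <= y1.
  move=> sym; case: (leqP y2 y1) => [y21|/ltnW y12]; first exact: sym.
  by rewrite (sym x2 y2 x1 y1 q_lt q_le p_lt p_le (esym eq_lin) y12).
have a_dvd := coprime_dvdn_subn coprime_ab eq_lin.
case: (posnP (y1 - y2)) => [y12|/dvdn_leq/(_ a_dvd) a_le].
  have y_eq : y1 = y2 by lia.
  by move: eq_lin; rewrite y_eq => /addnI/eqP; rewrite eqn_pmul2l // => /eqP ->.
have y1_eq : y1 = y2 + a by lia.
move: eq_lin; rewrite y1_eq mulnDr -addnA => /addnI.
rewrite mulnC -mulnDr => /eqP; rewrite eqn_pmul2l // => /eqP; lia.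
Qed.

Section RationalDyckPath.
Variables (a b : nat) (pi : seq nat).
Hypotheses (a_gt0 : 0 < a) (b_gt0 : 0 < b) (coprime_ab : coprime a b) (pi_inD : inD a b pi).

Local Notation w := (word a b pi).
Local Notation steps := (steps_from (0, 0) w).
Local Notation north := (starts_from (0, 0) w N).

Lemma count_N_word : count_mem N w = a.
Proof. by case/andP: pi_inD => /count_word[]. Qed.

Lemma count_E_word : count_mem E w = b.
Proof. by case/andP: pi_inD => /count_word[]. Qed.

Lemma size_word : size w = a + b.
Proof.
rewrite -(count_predC (pred1 N)) count_N_word -count_E_word.
by congr (_ + _); apply: eq_count => -[].
Qed.

Lemma level_path_ge0 p : p \in path_points (0, 0) w -> (0 <= level a b p)%R.
Proof. by case/andP: pi_inD => _ /allP; apply. Qed.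

Lemma step_bounds q : q \in steps ->
  [/\ q.1.1 + q.1.2 < a + b, q.1.2 <= a & q.2 = N -> q.1.2 < a].
Proof.
move=> qw; have [y_le y_lt] := steps_from_bounds qw.
rewrite /= !add0n count_N_word in y_le y_lt; split => //.
have : q.1.1 + q.1.2 \in [seq r.1.1 + r.1.2 | r <- steps] by apply: map_f.
by rewrite coord_sum_steps_from mem_iota size_word.
Qed.

Lemma level_inj_steps : {in unzip1 steps &, injective (level a b)}.
Proof.
move=> _ _ /mapP[p pw ->] /mapP[q qw ->].
have [p_lt p_le _] := step_bounds pw; have [q_lt q_le _] := step_bounds qw.
exact: level_inj.
Qed.

Lemma level_east_ge p : (p, E) \in steps -> (Posz a <= level a b p)%R.
Proof. by move/steps_from_end/level_path_ge0; rewrite level_move /=; lia. Qed.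

Lemma level_north_east_neq p q : p \in north -> (q, E) \in steps ->
  level a b p != level a b q.
Proof.
rewrite mem_starts_from => pN qE; apply/eqP => eq_level.
have eq_pq : p = q by apply: level_inj_steps eq_level; apply/mapP; [exists (p, N) | exists (q, E)].
move: qE; rewrite -eq_pq => pE.
by have := uniq_map_inj_in (uniq_steps_from_points (0, 0) w) pN pE erefl.
Qed.

Lemma north_height_lt p : p \in north -> p.2 < a.
Proof. by rewrite mem_starts_from => /step_bounds[_ _]; apply. Qed.

Lemma mem_DeltaC m : (0 <= m)%R ->
  m \in DeltaC a b pi <->
  exists2 p, p \in north & exists X, [/\ p.1 < X, X <= b & m = level a b (X, p.2)].
Proof.
move=> m_ge0; rewrite /DeltaC mem_filter m_ge0 /=.
change (east_starts w) with (starts_from (0, 0) w E); split.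
- case/flatten_mapP => p pE /mapP[y' /[!mem_iota] /andP[_ y'_lt] ->].
  have : exists q, [/\ q \in starts_from (0, 0) w E, y' < q.2 & p.1.+1 = q.1.+1].
    by exists p.
  case/under_east_step_iff => [[q [qN <- q_lt X_le]]|[_ //]].
  by exists q => //; exists p.1.+1; rewrite -count_E_word.
- case=> q qN [X [q_lt X_le ->]].
  have [p [pE q_lt_p ->]] : exists p, [/\ p \in starts_from (0, 0) w E, q.2 < p.2 & X = p.1.+1].
    by apply/under_east_step_iff; left; exists q; rewrite /= count_E_word.
  by apply/flatten_mapP; exists p => //; apply/map_f; rewrite mem_iota.
Qed.

(* The squares right of a north step from p have levels level p - a t, t >= 1;
   when lam < level p the one in the window lam - a, ..., lam - 1 is at
   t = window_quotient p + 1, of level lam - a + window_residue p.  Distinct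
   such steps have distinct residues, their heights being distinct mod a. *)
Section Window.
Variable lp : nat * nat.
Hypothesis lpE : (lp, E) \in steps.

Local Notation lam := (level a b lp).

Definition window_residue (p : nat * nat) := (`|level a b p - lam|%N %% a)%N.

Definition window_quotient (p : nat * nat) := (`|level a b p - lam|%N %/ a)%N.

Lemma level_window_divn p : (lam < level a b p)%R ->
  level a b p = (lam + Posz (window_quotient p * a) + Posz (window_residue p))%R.
Proof.
move=> lt_p; rewrite -addrA -PoszD -divn_eq gtz0_abs ?subr_gt0 //.
by rewrite addrC subrK.
Qed.

Lemma window_residue_inj :
  {in [seq p <- north | (lam < level a b p)%R] &, injective window_residue}.
Proof.
move=> p1 p2 /[!mem_filter] /andP[lt1 p1N] /andP[lt2 p2N] eq_res.
apply: (starts_from_north_inj p1N p2N).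
apply: (@height_eq_of_coprime a b _ _ (p1.1 + window_quotient p1)
                                     (p2.1 + window_quotient p2)); rewrite ?north_height_lt //.
move: (level_window_divn lt1) (level_window_divn lt2).
rewrite eq_res /level !mulnDr ![a * window_quotient _]mulnC.
move: (b * _)%N (b * _)%N (b * _)%N (a * _)%N (a * _)%N (a * _)%N.
by move: (window_quotient p1 * a)%N (window_quotient p2 * a)%N (window_residue p2) => *; lia.
Qed.

Lemma level_window_ge0 k : (0 <= lam - Posz a + Posz k)%R.
Proof. by have := level_east_ge lpE; lia. Qed.

Lemma mem_DeltaC_window_residue p : p \in north -> (lam < level a b p)%R ->
  (lam - Posz a + Posz (window_residue p))%R \in DeltaC a b pi.
Proof.
move=> pN lt_p; set X := (p.1 + (window_quotient p).+1)%N.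
have lev_X : level a b (X, p.2) = (lam - Posz a + Posz (window_residue p))%R.
  rewrite level_shift_right -surjective_pairing level_window_divn // mulnSr mulnC.
  by move: lam (window_quotient p * a)%N (window_residue p) => *; lia.
apply/(mem_DeltaC (level_window_ge0 _)); exists p => //; exists X.
split => //; first by rewrite /X addnS ltnS leq_addr.
have aX_le : (a * X <= b * p.2)%N.
  by move: (level_window_ge0 (window_residue p)); rewrite -lev_X /level /=; lia.
have : (a * X < a * b)%N.
  by apply: leq_ltn_trans aX_le _; rewrite [a * b]mulnC ltn_pmul2l // north_height_lt.
by rewrite ltn_pmul2l // => /ltnW.
Qed.

Lemma mem_DeltaC_window k : k < a -> (lam - Posz a + Posz k)%R \in DeltaC a b pi ->
  exists2 p, p \in [seq p <- north | (lam < level a b p)%R] & window_residue p = k.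
Proof.
move=> k_lt /(mem_DeltaC (level_window_ge0 _)) [q qN [X [q_lt _ lev_X]]].
have lev_q : level a b q = (lam + Posz ((X - q.1).-1 * a) + Posz k)%R.
  have := level_shift_right a b q.1 q.2 (X - q.1); rewrite subnKC 1?ltnW //.
  rewrite -surjective_pairing -lev_X -{1}(prednK (_ : 0 < X - q.1)%N) ?subn_gt0 //.
  by rewrite mulnS mulnC; move: lam ((X - q.1).-1 * a)%N => *; lia.
have lt_q : (lam < level a b q)%R.
  rewrite lt_def (level_north_east_neq qN lpE) lev_q /=.
  by move: lam ((X - q.1).-1 * a)%N => *; lia.
exists q; first by rewrite mem_filter lt_q.
rewrite /window_residue lev_q.
have -> : (lam + Posz ((X - q.1).-1 * a) + Posz k - lam)%R = Posz ((X - q.1).-1 * a + k).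
  by rewrite PoszD; move: lam ((X - q.1).-1 * a)%N => *; lia.
by rewrite absz_nat modnMDl modn_small.
Qed.

Lemma count_window :
  count (fun k => (lam - Posz a + Posz k)%R \in DeltaC a b pi) (iota 0 a)
  = count (fun p => (lam < level a b p)%R) north.
Proof.
rewrite -!size_filter -(size_map window_residue); apply/perm_size/uniq_perm.
- by rewrite filter_uniq ?iota_uniq.
- rewrite map_inj_in_uniq ?filter_uniq ?uniq_starts_from_north //; exact: window_residue_inj.
move=> k; rewrite mem_filter mem_iota add0n /=; apply/andP/mapP => [[kD k_lt]|[p]].
  by have [p p_in <-] := mem_DeltaC_window k_lt kD; exists p.
rewrite mem_filter => /andP[lt_p pN] ->.
by rewrite mem_DeltaC_window_residue // ltn_pmod.
Qed.

Lemma count_north_above :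
  count (fun p => (lam < level a b p)%R) north
  = a - count (fun p => (level a b p < lam)%R) north.
Proof.
have split_north : count (fun p => (level a b p < lam)%R) north
          + count (predC (fun p => (level a b p < lam)%R)) north = a.
  by rewrite count_predC size_starts_from_north count_N_word.
rewrite -[X in X - _]split_north addKn; apply: eq_in_count => p pN /=.
by rewrite lt_def (level_north_east_neq pN lpE) leNgt.
Qed.

End Window.

Local Notation S := (sort (by_level a b) steps).

Lemma sorted_steps_by_level : sorted (fun p q => (level a b p.1 < level a b q.1)%R) S.
Proof. exact: sorted_sort_by_level (uniq_steps_from_points _ _) level_inj_steps. Qed.

Lemma generators_by_level :
  generators a b pi = [seq (level a b q.1 - Posz a)%R | q <- S & q.2 == E].
Proof.
apply: (sorted_eq (leT := <=%R)).
- exact: le_trans.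
- exact: le_anti.
- by apply: sort_sorted; exact: le_total.
- have lt_tr : transitive (fun p q : (nat * nat) * step => (level a b p.1 < level a b q.1)%R).
    by move=> q p r; exact: lt_trans.
  rewrite sorted_map; apply: sub_sorted (sorted_filter lt_tr _ sorted_steps_by_level) => p q /=.
  by rewrite lerD2r => /ltW.
rewrite perm_sort.
have -> : [seq sq_level a b p.1 p.2 | p <- east_starts w]
        = [seq (level a b q.1 - Posz a)%R | q <- steps & q.2 == E].
  by rewrite -map_comp; apply: eq_map => q /=; rewrite /sq_level (level_move _ _ q.1 E).
by apply/perm_map/perm_filter; rewrite perm_sym perm_sort.
Qed.

Lemma G_ba_by_level : G_ba a b pi = [seq a - y | y <- east_heights 0 (unzip2 S)].
Proof.
rewrite /G_ba generators_by_level (east_heights_sorted _ sorted_steps_by_level) -!map_comp.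
apply/eq_in_map => q; rewrite mem_filter => /andP[/eqP qE qS] /=.
have q_step : (q.1, E) \in steps.
  by rewrite -qE -surjective_pairing -(perm_mem (permEl (perm_sort (by_level a b) steps))).
rewrite /g_ba count_map (count_window q_step) (count_north_above q_step) add0n.
congr (_ - _); rewrite (permP (permEl (perm_sort _ _))) /starts_from count_map count_filter.
by apply: eq_count => r /=; rewrite andbC.
Qed.

End RationalDyckPath.

Unset Implicit Arguments.

Theorem mainTheorem9 (a b : nat) :
  0 < a -> 0 < b -> coprime a b ->
  forall pi : seq nat, inD a b pi ->
    is_box_partition a b (G_ba a b pi) /\
    word a b (G_ba a b pi) = sw_plus a b (rev (word a b pi)).
Proof.
move=> a_gt0 b_gt0 coprime_ab pi pi_inD.
set w := word a b pi; set steps := steps_from (0, 0) w.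
have sw_eq : sw_plus a b (rev w) = unzip2 (sort (by_level a b) steps).
  apply: sw_plus_rev.
  - by rewrite drift_count count_N_word // count_E_word // mulnC subrr.
  - exact: level_inj_steps.
  - by apply/allP => q /steps_from_start; apply: level_path_ge0.
have perm_sw : perm_eq (sw_plus a b (rev w)) w.
  by rewrite sw_eq -[in X in perm_eq _ X](unzip2_steps_from (0, 0) w) perm_map ?perm_sort.
rewrite G_ba_by_level // -sw_eq; split.
- by apply: box_partition_east_heights; rewrite (permP perm_sw) ?count_N_word ?count_E_word.
- by apply: word_east_heights; rewrite (permP perm_sw) count_N_word.
Qed.
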